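(* Let $T:\mathbb{R}_+^N\to\mathbb{R}_{++}^N$ be a standard interference mapping, let $\|\cdot\|_a$ and $\|\cdot\|_b$ be monotone norms on $\mathbb{R}^N$, and let $E$ be the $\|\cdot\|_b$-energy efficiency function defined in the context. Then $E$ is non-increasing: for all $\bar p_1>\bar p_2>0$, $E(\bar p_1)\le E(\bar p_2)$.
   Context: Vector inequalities are coordinatewise; $\mathbb{R}_+$, $\mathbb{R}_{++}$ denote nonnegative and positive reals. A norm $\|\cdot\|$ on $\mathbb{R}^N$ is monotone if $\mathbf{0}\le\mathbf{x}\le\mathbf{y}$ implies $\|\mathbf{x}\|\le\|\mathbf{y}\|$. A function $f:\mathbb{R}^N\to\mathbb{R}_{++}\cup\{\infty\}$ is a standard interference function if: (1) for all $\mathbf{x}\in\mathbb{R}_+^N$ and all $\alpha>1$, $\alpha f(\mathbf{x})>f(\alpha\mathbf{x})$; (2) for all $\mathbf{x}_1,\mathbf{x}_2\in\mathbb{R}_+^N$, $\mathbf{x}_1\ge\mathbf{x}_2$ implies $f(\mathbf{x}_1)\ge f(\mathbf{x}_2)$; (3) $f(\mathbf{x})=\infty$ iff $\mathbf{x}\notin\mathbb{R}_+^N$. A standard interference mapping is $T:\mathbb{R}_+^N\to\mathbb{R}_{++}^N$, $T(\mathbf{x})=(t_1(\mathbf{x}),\dots,t_N(\mathbf{x}))$, with each $t_i$ a standard interference function. For a power budget $\bar p>0$, consider the problem: maximize $c$ over $(\mathbf{p},c)\in\mathbb{R}_+^N\times\mathbb{R}_{++}$ subject to $\mathbf{p}=cT(\mathbf{p})$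 and $\|\mathbf{p}\|_a\le\bar p$. It is known that this problem has a unique solution $(\mathbf{p}_{\bar p},c_{\bar p})\in\mathbb{R}_{++}^N\times\mathbb{R}_{++}$, and that $\bar p_1>\bar p_2>0$ implies $\mathbf{p}_{\bar p_1}>\mathbf{p}_{\bar p_2}$ coordinatewise. Define $U(\bar p):=c_{\bar p}$, $P(\bar p):=\mathbf{p}_{\bar p}$, and $E(\bar p):=U(\bar p)/\|P(\bar p)\|_b$, which equals $1/\|T(\mathbf{p}_{\bar p})\|_b$. *)

From mathcomp Require Import all_boot all_order all_algebra.
From mathcomp Require Import reals.
Set Implicit Arguments. Unset Strict Implicit. Unset Printing Implicit Defensive.
Import Order.TTheory GRing.Theory Num.Theory.
Local Open Scope ring_scope.

Section Defs.
Variables (R : realType) (N : nat).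
Notation vec := ('I_N -> R).

Definition vle (x y : vec) : Prop := forall i, x i <= y i.
Definition vlt (x y : vec) : Prop := forall i, x i < y i.
Definition vzero : vec := fun _ => 0.
Definition vscale (c : R) (x : vec) : vec := fun i => c * x i.
Definition vadd (x y : vec) : vec := fun i => x i + y i.

Definition is_norm (nu : vec -> R) : Prop :=
  [/\ (forall x, 0 <= nu x),
      (forall x, nu x = 0 -> x = vzero),
      (forall c x, nu (vscale c x) = `|c| * nu x)
    & (forall x y, nu (vadd x y) <= nu x + nu y)].

Definition monotone_norm (nu : vec -> R) : Prop :=
  is_norm nu /\ forall x y, vle vzero x -> vle x y -> nu x <= nu y.

(* A standard interference function, restricted to its effective domain R_+^N
   (outside R_+^N it is +oo by axiom (3), so only values on R_+^N matter). *)
Definition std_interference_fun (f : vec -> R) : Prop :=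
  [/\ (forall x, vle vzero x -> 0 < f x),
      (forall x alpha, vle vzero x -> 1 < alpha -> f (vscale alpha x) < alpha * f x)
    & (forall x1 x2, vle vzero x2 -> vle x2 x1 -> f x2 <= f x1)].

Definition std_interference_map (T : vec -> vec) : Prop :=
  forall i, std_interference_fun (fun x => T x i).

Definition feasible (T : vec -> vec) (na : vec -> R) (pbar : R) (p : vec) (c : R)
  : Prop :=
  [/\ vle vzero p, 0 < c, (forall i, p i = c * T p i) & na p <= pbar].

Definition is_solution (T : vec -> vec) (na : vec -> R) (pbar : R) (p : vec) (c : R)
  : Prop :=
  feasible T na pbar p c /\ forall p' c', feasible T na pbar p' c' -> c' <= c.

Definition energy_eff (nb : vec -> R) (U : R -> R) (P : R -> vec) (pbar : R) : R :=
  U pbar / nb (P pbar).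

End Defs.

(* The solution powers are fixed points p = c T(p) with c the optimal value, and such fixed points
   grow with c: for c2 <= c1, if the largest ratio alpha = p2_j / p1_j exceeded 1, scalability
   would give p2_j = c2 T_j(p2) <= c2 T_j(alpha p1) < alpha c1 T_j(p1) = p2_j.  A larger budget
   admits every formerly feasible pair, so c and hence p, and by monotonicity T(p), increase
   with the budget.  Homogeneity of the norm turns E = c / ||c T(p)||_b into 1 / ||T(p)||_b. *)
From mathcomp Require Import all_boot all_order all_algebra.
From mathcomp Require Import reals.
Set Implicit Arguments. Unset Strict Implicit.
Import Order.TTheory GRing.Theory Num.Theory.
Local Open Scope ring_scope.

Section InterferenceFixedPoints.
Variables (R : realType) (N : nat).
Local Notation vec := ('I_N -> R).
Local Notation vec0 := (@vzero R N).

Section StandardInterferenceMap.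
Variable T : vec -> vec.
Hypothesis HT : std_interference_map T.

Lemma std_interference_map_gt0 x : vle vec0 x -> vlt vec0 (T x).
Proof. by move=> x_ge0 i; case: (HT i) => T_gt0 _ _; exact: T_gt0. Qed.

Lemma std_interference_map_homo x y : vle vec0 x -> vle x y -> vle (T x) (T y).
Proof. by move=> x_ge0 le_xy i; case: (HT i) => _ _ T_homo; exact: T_homo. Qed.

Lemma std_interference_map_subscale x a i :
  vle vec0 x -> 1 < a -> T (vscale a x) i < a * T x i.
Proof. by move=> x_ge0 a_gt1; case: (HT i) => _ T_sub _; exact: T_sub. Qed.

Lemma scaled_fixed_point_homo (p1 p2 : vec) (c1 c2 : R) :
  vle vec0 p1 -> vle vec0 p2 -> 0 < c2 -> c2 <= c1 ->
  (forall i, p1 i = c1 * T p1 i) -> (forall i, p2 i = c2 * T p2 i) ->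
  vle p2 p1.
Proof.
move=> p1_ge0 p2_ge0 c2_gt0 le_c21 fix1 fix2 i0.
have c1_gt0 : 0 < c1 by exact: lt_le_trans le_c21.
have p1_gt0 k : 0 < p1 k.
  by rewrite fix1 mulr_gt0 //; exact: std_interference_map_gt0.
pose r k := p2 k / p1 k.
have [j _ r_max] := @arg_maxP _ R _ i0 xpredT r isT.
case: (leP (r j) 1) => [r_le1 | r_gt1].
  by have := le_trans (r_max i0 isT) r_le1; rewrite ler_pdivrMr // mul1r.
set alpha := r j in r_max r_gt1.
have alpha_gt0 : 0 < alpha by exact: lt_trans r_gt1.
have q_ge0 : vle vec0 (vscale alpha p1).
  by move=> k; rewrite /vscale mulr_ge0 // ltW.
have le_p2q : vle p2 (vscale alpha p1).
  by move=> k; rewrite /vscale -ler_pdivrMr //; exact: r_max.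
have p2jE : alpha * p1 j = p2 j by rewrite /alpha /r mulfVK // gt_eqF.
suff : p2 j < p2 j by rewrite ltxx.
rewrite {1}fix2.
apply: (@le_lt_trans _ _ (c2 * T (vscale alpha p1) j)).
  by rewrite ler_pM2l //; exact: std_interference_map_homo.
apply: (@lt_le_trans _ _ (c2 * (alpha * T p1 j))).
  by rewrite ltr_pM2l //; exact: std_interference_map_subscale.
rewrite -p2jE fix1 mulrCA ler_pM2l // ler_pM2r //.
exact: std_interference_map_gt0.
Qed.

End StandardInterferenceMap.

Section MonotoneNorm.
Variable nu : vec -> R.
Hypothesis Hnu : monotone_norm nu.

Lemma monotone_norm_ext x y : vle vec0 x -> (forall i, x i = y i) -> nu x = nu y.
Proof.
case: Hnu => _ nu_homo x_ge0 eq_xy.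
have y_ge0 : vle vec0 y by move=> i; rewrite -eq_xy.
by apply: le_anti; rewrite !nu_homo // => i; rewrite eq_xy.
Qed.

(* The case [nu x = 0] only occurs for [N = 0], where [nu y = 0] too and [0^-1 = 0]. *)
Lemma monotone_norm_invr_homo x y :
  vlt vec0 x -> vle x y -> (nu y)^-1 <= (nu x)^-1.
Proof.
have [[nu_ge0 nu_eq0 _ _] nu_homo] := Hnu.
move=> x_gt0 le_xy; have x_ge0 : vle vec0 x by move=> i; exact: ltW.
have le_nu : nu x <= nu y by exact: nu_homo.
have [nux_gt0 | ] := ltP 0 (nu x).
  by rewrite lef_pV2 ?posrE // (lt_le_trans nux_gt0).
rewrite le_eqVlt ltNge nu_ge0 orbF => /eqP/nu_eq0 x0.
have no_index (i : 'I_N) : False by have := x_gt0 i; rewrite x0 ltxx.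
have le_yx : nu y <= nu x by apply: nu_homo => i; case: (no_index i).
by rewrite (@le_anti _ _ (nu y) (nu x)) ?le_yx.
Qed.

End MonotoneNorm.

Lemma feasible_budget_homo (T : vec -> vec) (na : vec -> R) (q1 q2 : R) (p : vec) (c : R) :
  q2 <= q1 -> feasible T na q2 p c -> feasible T na q1 p c.
Proof. by move=> le_q [p_ge0 c_gt0 fix_p na_le]; split=> //; exact: le_trans le_q. Qed.

Lemma energy_eff_fixed_point (T : vec -> vec) (na nb : vec -> R) (U : R -> R) (P : R -> vec)
    (q : R) :
  std_interference_map T -> monotone_norm nb ->
  feasible T na q (P q) (U q) -> energy_eff nb U P q = (nb (T (P q)))^-1.
Proof.
move=> HT Hnb [P_ge0 U_gt0 fix_P _].
have nb_scale : nb (P q) = U q * nb (T (P q)).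
  have [[_ _ nb_scale _] _] := Hnb.
  by rewrite -(gtr0_norm U_gt0) -nb_scale; exact: monotone_norm_ext.
by rewrite /energy_eff nb_scale invfM mulrA divff ?gt_eqF // mul1r.
Qed.

End InterferenceFixedPoints.

Theorem lemma2 (R : realType) (N : nat) (T : ('I_N -> R) -> ('I_N -> R))
  (na nb : ('I_N -> R) -> R) (U : R -> R) (P : R -> ('I_N -> R)) :
  std_interference_map T ->
  monotone_norm na -> monotone_norm nb ->
  (forall pbar, 0 < pbar -> is_solution T na pbar (P pbar) (U pbar)) ->
  forall pbar1 pbar2, 0 < pbar2 -> pbar2 < pbar1 ->
    energy_eff nb U P pbar1 <= energy_eff nb U P pbar2.
Proof.
move=> HT _ Hnb Hsol q1 q2 q2_gt0 lt_q21.
have [feas1 U_max1] := Hsol q1 (lt_trans q2_gt0 lt_q21).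
have [feas2 _] := Hsol q2 q2_gt0.
have le_U : U q2 <= U q1 by apply: U_max1; exact: feasible_budget_homo (ltW lt_q21) feas2.
have [P1_ge0 _ fix1 _] := feas1; have [P2_ge0 U2_gt0 fix2 _] := feas2.
have le_P : vle (P q2) (P q1).
  exact: (scaled_fixed_point_homo HT P1_ge0 P2_ge0 U2_gt0 le_U fix1 fix2).
rewrite (energy_eff_fixed_point HT Hnb feas1) (energy_eff_fixed_point HT Hnb feas2).
apply: (monotone_norm_invr_homo Hnb); first exact: std_interference_map_gt0.
exact: std_interference_map_homo.
Qed.
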